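(* Let $(d_1,\ldots,d_n)$ be a tree degree sequence with $n\geq 3$, let $V=\{v_1,\ldots,v_n\}$, and let $X\subseteq V$ be such that (i) $d_i>1$ for every $v_i\in X$, (ii) $|X|\leq n/2$, and (iii) $\sum_{i:v_i\in X}d_i\geq \sum_{i:v_i\in V\setminus X}d_i$. Then there is a tree $T$ with vertex set $V$ such that $d_T(v_i)=d_i$ for every $v_i\in V$ and $X$ is a minimum vertex cover of $T$.
   Context: All graphs are finite, simple and undirected. The degree sequence of a graph is the nonincreasing sequence of its vertex degrees (so $d_1\geq\cdots\geq d_n$). A tree degree sequence is the degree sequence of some tree. $d_T(v)$ denotes the degree of $v$ in $T$. *)

From mathcomp Require Import all_boot.
Set Implicit Arguments. Unset Strict Implicit. Unset Printing Implicit Defensive.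

Definition simple_graph (T : finType) (e : rel T) : Prop :=
  irreflexive e /\ symmetric e.

Definition connected (T : finType) (e : rel T) : Prop :=
  forall x y : T, connect e x y.

Definition acyclic (T : finType) (e : rel T) : Prop :=
  forall p : seq T, uniq p -> 2 < size p -> ~~ cycle e p.

Definition is_tree (T : finType) (e : rel T) : Prop :=
  [/\ simple_graph e, connected e & acyclic e].

Definition deg (T : finType) (e : rel T) (v : T) : nat := #|[set w | e v w]|.

Definition is_vertex_cover (T : finType) (e : rel T) (X : {set T}) : Prop :=
  forall x y, e x y -> (x \in X) || (y \in X).

Definition is_min_vertex_cover (T : finType) (e : rel T) (X : {set T}) : Prop :=
  is_vertex_cover e X /\ forall Y : {set T}, is_vertex_cover e Y -> #|X| <= #|Y|.

Definition is_tree_degree_sequence (n : nat) (d : 'I_n -> nat) : Prop :=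
  (forall i j : 'I_n, i <= j -> d j <= d i) /\
  exists e : rel 'I_n, is_tree e /\ forall v, deg e v = d v.

From mathcomp Require Import all_boot zify.
Set Implicit Arguments. Unset Strict Implicit. Unset Printing Implicit Defensive.

(* Induction on the number of vertices, under a relaxation [admissible] of the
   hypotheses.  The degree sum 2|S| - 2 together with the weight condition forces
   a leaf l outside X.  If some x in X has degree 2, delete l and x, decrement a
   well-chosen vertex w, and reattach the pendant path w - x - l: every vertex
   cover contains x or l, so X stays minimum.  Otherwise every vertex of X has
   degree at least 3, which forces |X| < |S \ X|; delete l, decrement some x in X
   and reattach l at x. *)

Section TreeDegreeSum.
Variables (T : finType) (e : rel T).
Hypotheses (e_irr : irreflexive e) (e_sym : symmetric e) (e_acyclic : acyclic e).

Definition induced (S : {set T}) : rel T := fun a b => [&& e a b, a \in S & b \in S].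
Definition deg_in (S : {set T}) v := #|[set y in S | e v y]|.
Definition connected_in (S : {set T}) := forall x y, x \in S -> y \in S -> connect (induced S) x y.

Lemma induced_sub (S : {set T}) : subrel (induced S) e.
Proof. by move=> a b /and3P[]. Qed.

Lemma induced_path_in (S : {set T}) (x : T) p :
  x \in S -> path (induced S) x p -> all (mem S) (x :: p).
Proof.
elim: p x => [|y p IH] x xS /=; first by rewrite xS.
by case/andP=> /and3P[_ _ yS] pp; rewrite xS; exact: IH.
Qed.

Lemma deg_in_gt0 (S : {set T}) (v w : T) :
  connected_in S -> v \in S -> w \in S -> w != v -> 0 < deg_in S v.
Proof.
move=> con vS wS wv; case/connectP: (con _ _ vS wS) => [[|y p]] /=.
  by move=> _ wv'; rewrite wv' eqxx in wv.
by case/andP=> /and3P[evy _ yS] _ _; apply/card_gt0P; exists y; rewrite inE yS.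
Qed.

(* Each step extends the path by a neighbour of its head other than the previous
   vertex; that neighbour is fresh since otherwise it would close a cycle. *)
Lemma exists_long_path (S : {set T}) : {in S, forall v, 2 <= deg_in S v} -> S != set0 ->
  forall m, exists x p, [/\ x \in S, path (induced S) x p, uniq (x :: p) & size p = m].
Proof.
move=> deg2 /set0Pn[x0 x0S]; elim=> [|m [x [p [xS pp up sp]]]].
  by exists x0, [::].
pose N := [set y in S | e x y].
have : 0 < #|N :\ head x p|.
  by have := deg2 _ xS; rewrite /deg_in -/N (cardsD1 (head x p) N); case: (_ \in N) => /=; lia.
case/card_gt0P => w; rewrite !inE => /andP[wh /andP[wS exw]].
have wx : w != x by apply: contraTneq exw => ->; rewrite e_irr.
have wp : w \notin x :: p.
  rewrite inE (negbTE wx) /=; apply/negP => wp.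
  case: p pp up sp wh wp => [|y q] //= /andP[rxy pq] uq _ wy.
  rewrite inE (negbTE wy) /= => wq.
  case/splitPr: wq pq uq => q1 q2 pq uq.
  have uc : uniq (x :: rcons (y :: q1) w).
    apply: (@prefix_uniq _ _ (x :: y :: q1 ++ w :: q2)); last by rewrite /= uq.
    have -> : x :: y :: q1 ++ w :: q2 = (x :: rcons (y :: q1) w) ++ q2.
      by rewrite -cats1 /= -catA.
    exact: prefix_prefix.
  have sc : 2 < size (x :: rcons (y :: q1) w) by rewrite /= size_rcons.
  apply: (negP (e_acyclic uc sc)).
  move: pq; rewrite cat_path => /andP[pq1 /= /andP[ew _]].
  rewrite /= rcons_path last_rcons (e_sym w x) exw andbT rcons_path /=.
  by rewrite (induced_sub ew) (induced_sub rxy) (sub_path (@induced_sub S)).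
exists w, (x :: p); split => //=.
- by rewrite /induced (e_sym w x) exw wS xS pp.
- by rewrite /= wp.
- by rewrite sp.
Qed.

Lemma exists_leaf_in (S : {set T}) :
  2 <= #|S| -> connected_in S -> exists2 l, l \in S & deg_in S l = 1.
Proof.
move=> S2 con.
have pos v : v \in S -> 0 < deg_in S v.
  move=> vS; have : 0 < #|S :\ v| by rewrite (cardsD1 v) vS in S2; lia.
  by case/card_gt0P=> w; rewrite !inE => /andP[wv wS]; exact: deg_in_gt0 wS wv.
have [/exists_inP[l lS /eqP]|] := boolP [exists l in S, deg_in S l == 1]; first by exists l.
rewrite negb_exists_in => /forall_inP nl.
have deg2 v : v \in S -> 1 < deg_in S v.
  by move=> vS; have := pos _ vS; have := nl _ vS; case: (deg_in S v) => [|[|]].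
have S0 : S != set0 by rewrite -card_gt0; lia.
have [x [p [_ _ up sp]]] := exists_long_path deg2 S0 #|T|.
by have := max_card (mem (x :: p)); rewrite (card_uniqP up) /= sp ltnn.
Qed.

(* An inner vertex of a duplicate-free path has two distinct neighbours on it. *)
Lemma leaf_notin_path (S : {set T}) (l x : T) p : l \in S -> deg_in S l = 1 ->
  path (induced S) x p -> uniq (x :: p) -> last x p != l -> x != l -> l \notin p.
Proof.
move=> lS dl pp up ll xl; apply/negP => lp.
case/splitPr: lp pp up ll => p1 p2.
rewrite cat_path last_cat /= => /andP[_ /andP[ral pl]] up.
case: p2 pl up => [|b p2] /=; first by rewrite eqxx.
case/andP=> rlb _ up _.
have /cards1P [c Nc] : #|[set y in S | e l y]| == 1 by apply/eqP.
have aN : last x p1 \in [set y in S | e l y].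
  by case/and3P: ral => ea aS _; rewrite inE aS e_sym.
have bN : b \in [set y in S | e l y] by case/and3P: rlb => ea _ bS; rewrite inE bS.
rewrite Nc !inE in aN bN.
have : uniq ((x :: p1) ++ [:: l, b & p2]) by exact: up.
rewrite cat_uniq => /and3P[_ nb _].
have bm : b \in [:: l, b & p2] by rewrite !inE eqxx orbT.
by have := hasPn nb b bm; rewrite (eqP bN) -(eqP aN) /= mem_last.
Qed.

Lemma connected_in_setD1 (S : {set T}) (l : T) : connected_in S -> l \in S -> deg_in S l = 1 ->
  connected_in (S :\ l).
Proof.
move=> con lS dl x y; rewrite !inE => /andP[xl xS] /andP[yl yS].
case/connectP: (con x y xS yS) => p pp yE; rewrite yE in yl *.
move: yl; case/shortenP: pp => p' pp' up' _ yl.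
have lp := leaf_notin_path lS dl pp' up' yl xl.
apply/connectP; exists p' => //.
have /allP p'S := induced_path_in xS pp'.
apply: (@sub_in_path _ (mem (S :\ l)) (induced S)).
- move=> a b; rewrite !inE => /andP[al aS] /andP[bl bS] /and3P[eab _ _].
  by rewrite /induced !inE eab al aS bl bS.
- apply/allP => z zp; have zS : z \in S := p'S z zp.
  change (z \in S :\ l); rewrite !inE zS andbT.
  by move: zp; rewrite inE => /predU1P[->//|zp]; apply: contraNneq lp => <-.
- exact: pp'.
Qed.

(* Handshake lemma for trees: removing a leaf lowers the degree sum by two. *)
Lemma sum_deg_in (S : {set T}) : S != set0 -> connected_in S ->
  \sum_(v in S) deg_in S v + 2 = 2 * #|S|.
Proof.
move: {2}#|S| (leqnn #|S|) => m; elim: m S => [|m IH] S.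
  by rewrite leqn0 cards_eq0 => /eqP->; rewrite eqxx.
move=> Sm S0 con.
have [S2|S1] := ltnP 1 #|S|; last first.
  have /cards1P [r ->] : #|S| == 1 by rewrite eqn_leq S1 card_gt0.
  rewrite big_set1 cards1 /deg_in (_ : [set y in [set r] | e r y] = set0) ?cards0 //.
  by apply/setP => y; rewrite !inE; case: eqP => [->|]; rewrite ?e_irr.
have [l lS dl] := exists_leaf_in S2 con.
have cS : #|S| = #|S :\ l|.+1 by rewrite (cardsD1 l) lS.
have S0' : S :\ l != set0 by rewrite -card_gt0; lia.
have IH' := IH (S :\ l) (_ : #|S :\ l| <= m) S0' (connected_in_setD1 con lS dl).
have degS v : v \in S :\ l -> deg_in S v = e v l + deg_in (S :\ l) v.
  rewrite inE => /andP[vl vS]; rewrite /deg_in (cardsD1 l) inE lS e_sym /=.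
  by congr (_ + _); apply: eq_card => z; rewrite !inE andbA.
have nbrs_l : \sum_(v in S :\ l) (e v l : nat) = 1.
  rewrite -big_mkcondr /= sum1_card -dl /deg_in; apply: eq_card => z.
  by rewrite [in RHS]inE -topredE /= !inE e_sym; case: eqVneq => [->|]; rewrite ?e_irr ?andbF.
rewrite (big_setD1 l lS) /= dl (eq_bigr _ degS) big_split /= nbrs_l.
have := IH' ltac:(lia); lia.
Qed.

Lemma connected_in_setT : connected e -> connected_in [set: T].
Proof.
by move=> con x y _ _; rewrite (eq_connect (e' := e)) // => a b; rewrite /induced !inE !andbT.
Qed.

Lemma deg_in_setT v : deg_in [set: T] v = deg e v.
Proof. by apply: eq_card => z; rewrite !inE. Qed.

Lemma tree_sum_deg : connected e -> 0 < #|T| -> \sum_v deg e v + 2 = 2 * #|T|.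
Proof.
move=> con T0; rewrite -cardsT -(sum_deg_in _ (connected_in_setT con)); last first.
  by rewrite -card_gt0 cardsT.
by congr (_ + _); apply: eq_big => [v|v _]; rewrite ?inE ?deg_in_setT.
Qed.

Lemma tree_deg_gt0 : connected e -> 1 < #|T| -> forall v, 0 < deg e v.
Proof.
move=> con T1 v.
have : 0 < #|[set: T] :\ v| by move: T1; rewrite -cardsT (cardsD1 v) inE; lia.
case/card_gt0P => w; rewrite !inE => /andP[wv _].
by rewrite -deg_in_setT (deg_in_gt0 (w := w)) ?inE //; exact: connected_in_setT.
Qed.

End TreeDegreeSum.

Section LeafExtension.
Variable T : finType.

Definition tree_on (S : {set T}) (e : rel T) : Prop :=
  [/\ (forall x y, e x y -> (x \in S) && (y \in S)), irreflexive e, symmetric e,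
      {in S &, forall x y, connect e x y} & acyclic e].

Definition add_leaf (e : rel T) (u v : T) : rel T :=
  fun a b => [|| e a b, (a == u) && (b == v) | (a == v) && (b == u)].

Lemma add_leaf_sub (e : rel T) u v : subrel e (add_leaf e u v).
Proof. by move=> a b h; rewrite /add_leaf h. Qed.

Lemma add_leaf_sym (e : rel T) u v : symmetric e -> symmetric (add_leaf e u v).
Proof.
move=> sym a b; rewrite /add_leaf sym.
by case: (a == u); case: (a == v); case: (b == u); case: (b == v); rewrite ?orbT ?orbF.
Qed.

Lemma tree_on_set1 r : tree_on [set r] (fun _ _ => false).
Proof.
split => //; last by case=> [|x [|y [|z p]]].
by move=> x y; rewrite !inE => /eqP-> /eqP->; exact: connect0.
Qed.

Lemma deg_rel0 v : deg (fun _ _ : T => false) v = 0.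
Proof. by apply/eqP; rewrite cards_eq0; apply/eqP/setP => y; rewrite !inE. Qed.

Section AddLeaf.
Variables (S : {set T}) (e : rel T) (u v : T).
Hypotheses (tree_e : tree_on S e) (uS : u \in S) (vS : v \notin S).

Let e_in x y : e x y -> (x \in S) && (y \in S). Proof. by case: tree_e => + _ _ _ _; apply. Qed.
Let uv : u != v. Proof. by apply: contraNneq vS => <-. Qed.
Let ev y : e v y = false. Proof. by apply/negbTE; apply: contraNN vS => /e_in/andP[]. Qed.
Let ev' y : e y v = false. Proof. by apply/negbTE; apply: contraNN vS => /e_in/andP[]. Qed.

(* A cycle through the new leaf v would have to enter and leave it through u. *)
Lemma tree_on_add_leaf : tree_on (v |: S) (add_leaf e u v).
Proof.
case: tree_e => _ irr sym con acy; split.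
- move=> x y; rewrite !inE.
  case/or3P=> [/e_in/andP[-> ->]|/andP[/eqP-> /eqP->]|/andP[/eqP-> /eqP->]];
  by rewrite ?eqxx ?uS ?orbT.
- move=> x; rewrite /add_leaf irr /=; apply/negbTE.
  by apply/negP=> /orP[] /andP[/eqP-> /eqP] => [|/esym] /eqP; rewrite (negbTE uv).
- exact: add_leaf_sym.
- have sub : subrel (connect e) (connect (add_leaf e u v)).
    by apply: connect_sub => a b eab; apply/connect1/add_leaf_sub.
  have csym := sym_connect_sym (add_leaf_sym u v sym).
  have cvu : connect (add_leaf e u v) v u by apply: connect1; rewrite /add_leaf !eqxx !orbT.
  move=> x y; rewrite !inE => /predU1P[->|xS] /predU1P[->|yS].
  + exact: connect0.
  + exact: connect_trans cvu (sub _ _ (con _ _ uS yS)).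
  + by rewrite csym; exact: connect_trans cvu (sub _ _ (con _ _ uS xS)).
  + exact: sub (con _ _ xS yS).
- move=> p up sp; apply/negP => cp.
  have [vp|vp] := boolP (v \in p); last first.
    have := acy p up sp; rewrite (@eq_in_cycle _ [predC [:: v]] e (add_leaf e u v)) ?cp //.
      move=> a b; rewrite !inE => av bv.
      by rewrite /add_leaf (negbTE bv) (negbTE av) !andbF !orbF.
    by apply/allP => a ap; rewrite !inE; apply: contraNneq vp => <-.
  have [i q eq] := rot_to vp.
  have := cp; rewrite -(rot_cycle i) eq => cq.
  have uq : uniq (v :: q) by rewrite -eq rot_uniq.
  have sq : 2 < size (v :: q) by rewrite -eq size_rot.
  move: cq uq sq; case: q {eq cp} => [|a [|b q]] //= /and3P[eva _].
  rewrite rcons_path => /andP[_ elast] /and4P[_ + _ _] _.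
  have a_u : a = u by move: eva; rewrite /add_leaf ev [v == u]eq_sym (negbTE uv) eqxx => /eqP.
  have last_u : last b q = u.
    by move: elast; rewrite /add_leaf ev' eqxx andbT [v == u]eq_sym (negbTE uv) andbF orbF => /eqP.
  by rewrite a_u -{1}last_u mem_last.
Qed.

Lemma deg_add_leaf w : w \in S -> deg (add_leaf e u v) w = deg e w + (w == u).
Proof.
move=> wS; have wv : w != v by apply: contraNneq vS => <-.
rewrite /deg; have [->|wu] := eqVneq w u; last first.
  by rewrite addn0; apply: eq_card => y; rewrite !inE /add_leaf (negbTE wu) (negbTE wv) orbF.
have -> : [set y | add_leaf e u v u y] = v |: [set y | e u y].
  by apply/setP => y; rewrite !inE /add_leaf eqxx (negbTE uv) orbF orbC.
by rewrite cardsU1 inE ev' addn1.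
Qed.

Lemma deg_add_leaf_new : deg (add_leaf e u v) v = 1.
Proof.
rewrite /deg -(cards1 u); apply: eq_card => y.
by rewrite !inE /add_leaf ev eqxx [v == u]eq_sym (negbTE uv).
Qed.

End AddLeaf.

Lemma vertex_cover_subrel (e e' : rel T) Z :
  subrel e e' -> is_vertex_cover e' Z -> is_vertex_cover e Z.
Proof. by move=> sub cov x y /sub /cov. Qed.

Lemma vertex_cover_setD1 (e : rel T) Z a : (forall b, e a b = false) -> (forall b, e b a = false) ->
  is_vertex_cover e Z -> is_vertex_cover e (Z :\ a).
Proof.
move=> h1 h2 cov x y exy; rewrite !inE.
have xa : x != a by apply: contraTneq exy => ->; rewrite h1.
have ya : y != a by apply: contraTneq exy => ->; rewrite h2.
by rewrite xa ya; exact: cov exy.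
Qed.

End LeafExtension.

Section CoverTreeConstruction.
Variable T : finType.
Implicit Types (S X A : {set T}) (d f : T -> nat).

(* [lia] becomes very slow in the presence of set-membership hypotheses, which
   the arithmetic steps below never need. *)
Ltac card_lia := repeat match goal with
  | H : is_true (_ \in _) |- _ => clear H
  | H : is_true (~~ (_ \in _)) |- _ => clear H
  | H : is_true (_ != _) |- _ => clear H
  | H : is_true (_ \subset _) |- _ => clear H
  | H : _ = _ :> {set _} |- _ => clear H
  end; lia.

Definition decr d w : T -> nat := fun t => if t == w then (d t).-1 else d t.

(* The hypotheses of the theorem, with n = #|S|, relaxed so as to include the
   base cases: a single vertex has degree 0, and on two vertices the only tree is
   an edge, whose cover vertex is a leaf. *)
Record admissible S X d : Prop := Admissible {
  adm_sub : X \subset S;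
  adm_sum : \sum_(t in S) d t + 2 = 2 * #|S|;
  adm_pos : 1 < #|S| -> {in S, forall t, 0 < d t};
  adm_cover_deg : #|S| != 2 -> {in X, forall t, 1 < d t};
  adm_card : #|X| <= #|S :\: X|;
  adm_weight : \sum_(t in S :\: X) d t <= \sum_(t in X) d t }.

Definition cover_tree S X d : Prop :=
  exists e, [/\ tree_on S e, {in S, forall v, deg e v = d v} & is_min_vertex_cover e X].

Lemma sum_decr_in A d w : w \in A -> 0 < d w ->
  \sum_(t in A) decr d w t + 1 = \sum_(t in A) d t.
Proof.
move=> wA dw; rewrite !(big_setD1 w wA) /= {1}/decr eqxx.
rewrite (eq_bigr d) => [|t]; last by rewrite !inE /decr => /andP[/negbTE -> _].
by rewrite addnAC addn1 prednK.
Qed.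

Lemma sum_decr_out A d w : w \notin A -> \sum_(t in A) decr d w t = \sum_(t in A) d t.
Proof.
by move=> wA; apply: eq_bigr => t tA; rewrite /decr; case: eqP => // tw; rewrite -tw tA in wA.
Qed.

Lemma card_setD_subset X S : X \subset S -> #|S| = #|X| + #|S :\: X|.
Proof. by move=> XS; rewrite -(cardsID X S) (setIidPr XS). Qed.

Lemma sum_setD_subset f X S : X \subset S ->
  \sum_(t in S) f t = \sum_(t in X) f t + \sum_(t in S :\: X) f t.
Proof. by move=> XS; rewrite (big_setID X) /= (setIidPr XS). Qed.

Lemma card_mul_leq_sum A f c : {in A, forall t, c <= f t} -> #|A| * c <= \sum_(t in A) f t.
Proof. by move=> H; rewrite -sum_nat_const; apply: leq_sum. Qed.

Lemma sum_leq_card_mul A f c : {in A, forall t, f t <= c} -> \sum_(t in A) f t <= #|A| * c.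
Proof. by move=> H; rewrite -sum_nat_const; apply: leq_sum. Qed.

Lemma admissible_prune_leaf S X d x l : admissible S X d -> 2 < #|S| ->
  x \in X -> 2 < d x -> l \in S :\: X -> d l = 1 -> #|X| < #|S :\: X| ->
  admissible (S :\ l) X (decr d x).
Proof.
case=> XS sS pS X2 _ sXY S3 xX dx lY dl XY.
have xS : x \in S by exact: (subsetP XS).
move: (lY); rewrite inE => /andP[lX lS].
have xl : x != l by apply: contraNneq lX => <-.
have xSl : x \in S :\ l by rewrite !inE xl.
have YE : (S :\ l) :\: X = (S :\: X) :\ l.
  by apply/setP => t; rewrite !inE; case: (t == l); case: (t \in X).
have cY : #|S :\: X| = #|(S :\: X) :\ l|.+1 by rewrite (cardsD1 l (S :\: X)) lY.
have cS : #|S| = #|S :\ l|.+1 by rewrite (cardsD1 l S) lS.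
split.
- apply/subsetP => t tX; rewrite !inE (subsetP XS _ tX) andbT.
  by apply: contraNneq lX => <-.
- have := sum_decr_in xSl (ltnW (ltnW dx)).
  by move: sS; rewrite (big_setD1 l lS) dl /=; card_lia.
- move=> _ t; rewrite inE => /andP[_ tS]; rewrite /decr.
  by case: eqP => [->|_]; [card_lia | apply: pS => //; card_lia].
- move=> _ t tX; rewrite /decr.
  by case: eqP => [->|_]; [card_lia | apply: X2 => //; card_lia].
- by rewrite YE; card_lia.
- rewrite YE (sum_decr_out _ (_ : x \notin (S :\: X) :\ l)); last by rewrite !inE xX andbF.
  have := sum_decr_in xX (ltnW (ltnW dx)).
  by move: sXY; rewrite (big_setD1 l lY) dl /=; card_lia.
Qed.

Lemma cover_tree_graft_leaf S X d x l : X \subset S -> x \in X -> 0 < d x ->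
  l \in S :\: X -> d l = 1 -> cover_tree (S :\ l) X (decr d x) -> cover_tree S X d.
Proof.
move=> XS xX dx lY dl [e [tr dg [cov mc]]].
move: (lY); rewrite inE => /andP[lX lS].
have xSl : x \in S :\ l by rewrite !inE (subsetP XS _ xX) andbT; apply: contraNneq lX => <-.
have lSl : l \notin S :\ l by rewrite !inE eqxx.
exists (add_leaf e x l); split; [|move=> v vS|split].
- by rewrite -[in tree_on S](setD1K lS); exact: tree_on_add_leaf.
- have [->|vl] := eqVneq v l; first by rewrite (deg_add_leaf_new tr).
  have vSl : v \in S :\ l by rewrite !inE vl.
  rewrite (deg_add_leaf tr) // dg // /decr.
  by case: eqVneq => [->|]; rewrite ?addn0 ?addn1 ?prednK.
- by move=> a b /or3P[/cov //|/andP[/eqP-> _]|/andP[_ /eqP->]]; rewrite xX ?orbT.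
- by move=> Z cZ; apply/mc/(vertex_cover_subrel (@add_leaf_sub _ e x l) cZ).
Qed.

Lemma cover_tree_graft_pendant S X d x l w : X \subset S -> x \in X -> d x = 2 ->
  l \in S :\: X -> d l = 1 -> w \in S :\ l :\ x -> 0 < d w ->
  cover_tree (S :\ l :\ x) (X :\ x) (decr d w) -> cover_tree S X d.
Proof.
move=> XS xX dx lY dl wS' dw [e [tr dg [cov mc]]].
move: (lY); rewrite inE => /andP[lX lS].
have xS' : x \notin S :\ l :\ x by rewrite !inE eqxx.
have tr1 := tree_on_add_leaf tr wS' xS'.
have xS1 : x \in x |: (S :\ l :\ x) by rewrite !inE eqxx.
have lS1 : l \notin x |: (S :\ l :\ x).
  by rewrite !inE eqxx /= ?andbF ?orbF; apply: contraNneq lX => ->.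
have SE : l |: (x |: (S :\ l :\ x)) = S.
  by rewrite setD1K ?setD1K // !inE (subsetP XS _ xX) andbT; apply: contraNneq lX => <-.
pose e' := add_leaf (add_leaf e w x) x l.
have e_sub : subrel e e' by move=> a b /(@add_leaf_sub _ e w x) /(@add_leaf_sub _ _ x l).
exists e'; split; [by rewrite -SE; exact: tree_on_add_leaf|move=> v vS|split].
- have [->|vl] := eqVneq v l; first by rewrite (deg_add_leaf_new tr1).
  have vS1 : v \in x |: (S :\ l :\ x) by rewrite !inE vl vS andbT; case: eqP.
  rewrite (deg_add_leaf tr1) //.
  have [->|vx] := eqVneq v x; first by rewrite (deg_add_leaf_new tr wS' xS') dx.
  have vS' : v \in S :\ l :\ x by rewrite !inE vl vx.
  rewrite (deg_add_leaf tr) // dg // /decr addn0.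
  by case: eqVneq => [->|]; rewrite ?addn0 ?addn1 ?prednK.
- move=> a b /or3P[/or3P[/cov|/andP[_ /eqP->]|/andP[/eqP-> _]]|/andP[/eqP-> _]|/andP[_ /eqP->]];
    rewrite ?xX ?orbT //.
  by case/orP; rewrite !inE => /andP[_ ->]; rewrite ?orbT.
(* Every cover contains x or l, and deleting that vertex leaves a cover of e. *)
- move=> Z cZ.
  have [tr_in _ _ _ _] := tr.
  have drop a : a \in Z -> a \notin S :\ l :\ x -> #|X| <= #|Z|.
    move=> aZ aS.
    have [a_out a_in] : (forall b, e a b = false) /\ (forall b, e b a = false).
      by split=> b; apply/negbTE; apply: contraNN aS => /tr_in/andP[].
    have := mc _ (vertex_cover_setD1 a_out a_in (vertex_cover_subrel e_sub cZ)).
    by rewrite (cardsD1 a Z) aZ (cardsD1 x X) xX.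
  have exl : e' x l by rewrite /e' /add_leaf !eqxx !orbT.
  case/orP: (cZ _ _ exl) => [xZ|lZ]; first exact: drop xZ xS'.
  by apply: drop lZ _; rewrite !inE eqxx andbF.
Qed.

Lemma admissible_prune_pendant S X d x l w : admissible S X d -> 2 < #|S| ->
  x \in X -> d x = 2 -> l \in S :\: X -> d l = 1 -> w \in S :\ l :\ x ->
  (1 < #|S :\ l :\ x| -> 1 < d w) ->
  (w \in X -> #|S :\ l :\ x| != 2 -> 2 < d w) ->
  (w \in X -> \sum_(t in S :\: X) d t + 2 <= \sum_(t in X) d t) ->
  admissible (S :\ l :\ x) (X :\ x) (decr d w).
Proof.
case=> XS sS pS X2 cX sXY S3 xX dx lY dl wS' w_pos w_cover w_weight.
move: (lY) (wS'); rewrite !inE => /andP[lX lS] /and3P[wx wl wS].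
have xSl : x \in S :\ l by rewrite !inE (subsetP XS _ xX) andbT; apply: contraNneq lX => <-.
have cS : #|S| = #|S :\ l :\ x| + 2.
  by rewrite (cardsD1 l S) lS (cardsD1 x (S :\ l)) xSl addn2.
have cX' : #|X| = #|X :\ x| + 1 by rewrite (cardsD1 x X) xX addn1.
have YE : (S :\ l :\ x) :\: (X :\ x) = (S :\: X) :\ l.
  apply/setP => t; rewrite !inE; have [->|_] := eqVneq t x; first by rewrite xX !andbF.
  by case: (t == l); case: (t \in X).
have cY : #|S :\: X| = #|(S :\: X) :\ l| + 1 by rewrite (cardsD1 l (S :\: X)) lY addn1.
have dw : 0 < d w by apply: pS => //; card_lia.
split.
- apply/subsetP => t; rewrite !inE => /andP[tx tX]; rewrite tx (subsetP XS _ tX) andbT.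
  by apply: contraNneq lX => <-.
- have := sum_decr_in wS' dw.
  by move: sS; rewrite (big_setD1 l lS) (big_setD1 x xSl) dl dx /=; card_lia.
- move=> S2 t; rewrite !inE => /and3P[tx tl tS]; rewrite /decr.
  by case: eqP => [->|_]; [have := w_pos S2; card_lia | apply: pS => //; card_lia].
- move=> S2 t; rewrite !inE => /andP[tx tX]; rewrite /decr.
  case: eqP => [tw|_]; last by apply: X2 => //; card_lia.
  by rewrite tw in tX *; have := w_cover tX S2; card_lia.
- by rewrite YE; card_lia.
- rewrite YE; move: sXY; rewrite (big_setD1 l lY) dl (big_setD1 x xX) dx /=.
  have [wX|wX] := boolP (w \in X).
  + have wXx : w \in X :\ x by rewrite !inE wx.
    have := sum_decr_in wXx dw.
    rewrite (sum_decr_out _ (_ : w \notin (S :\: X) :\ l)); last by rewrite !inE wX andbF.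
    by have := w_weight wX; rewrite (big_setD1 l lY) dl (big_setD1 x xX) dx /=; card_lia.
  + have wY : w \in (S :\: X) :\ l by rewrite !inE wl wX.
    have := sum_decr_in wY dw.
    by rewrite (sum_decr_out _ (_ : w \notin X :\ x)) ?inE ?(negbTE wX) ?andbF //; card_lia.
Qed.

Lemma exists_pendant_pivot S X d x l : admissible S X d -> 2 < #|S| ->
  x \in X -> d x = 2 -> l \in S :\: X -> d l = 1 ->
  exists2 w, w \in S :\ l :\ x & admissible (S :\ l :\ x) (X :\ x) (decr d w).
Proof.
move=> adm S3 xX dx lY dl; have [XS sS pS X2 cX sXY] := adm.
have pos t : t \in S -> 0 < d t by apply: pS; card_lia.
move: (lY); rewrite inE => /andP[lX lS].
have xSl : x \in S :\ l by rewrite !inE (subsetP XS _ xX) andbT; apply: contraNneq lX => <-.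
have cS : #|S| = #|S :\ l :\ x| + 2.
  by rewrite (cardsD1 l S) lS (cardsD1 x (S :\ l)) xSl addn2.
have cXY := card_setD_subset XS; have sXY' := sum_setD_subset d XS.
have pivot w : w \in S :\ l :\ x -> (1 < #|S :\ l :\ x| -> 1 < d w) ->
    (w \in X -> #|S :\ l :\ x| != 2 -> 2 < d w) ->
    (w \in X -> \sum_(t in S :\: X) d t + 2 <= \sum_(t in X) d t) ->
    exists2 w, w \in S :\ l :\ x & admissible (S :\ l :\ x) (X :\ x) (decr d w).
  by move=> wS' hb hc he; exists w => //; exact: admissible_prune_pendant.
(* Use a non-leaf outside X if there is one.  Otherwise the degree sum gives
   \sum_(t in X) d t = 2 #|X| + #|S :\: X| - 2, which is large enough to afford
   decrementing a vertex of X (or |S| = 3 and the other leaf is used). *)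
have [/exists_inP[w wY dw]|] := boolP [exists w in S :\: X, 1 < d w].
  move: (wY); rewrite inE => /andP[wX wS].
  apply: (pivot w); rewrite ?(negbTE wX) //.
  rewrite !inE wS andbT; apply/andP; split; first by apply: contraNneq wX => ->.
  by apply: contraTneq dw => ->; rewrite dl.
rewrite negb_exists_in => /forall_inP Y_leaves.
have sY : \sum_(t in S :\: X) d t = #|S :\: X|.
  rewrite -sum1_card; apply: eq_bigr => t tY; have := Y_leaves t tY.
  by move: tY; rewrite inE => /andP[_ /pos]; card_lia.
have [X1|X1] := ltnP 1 #|X|; last first.
  have : 0 < #|(S :\: X) :\ l| by move: cXY; rewrite (cardsD1 l (S :\: X)) lY; card_lia.
  case/card_gt0P => w; rewrite !inE => /andP[wl /andP[wX wS]].
  apply: (pivot w); rewrite ?(negbTE wX) //.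
    by rewrite !inE wl wS !andbT; apply: contraNneq wX => ->.
  have /cards1P [z Xz] : #|X| == 1 by rewrite eqn_leq X1 card_gt0; apply/set0Pn; exists x.
  have sX : \sum_(t in X) d t = 2 by move: xX; rewrite Xz big_set1 inE => /eqP <-.
  by card_lia.
have [/exists_inP[w wX dw]|] := boolP [exists w in X :\ x, 2 < d w].
  move: (wX); rewrite !inE => /andP[wx wX'].
  apply: (pivot w) => [||_ _|_]; [|by move=> _; apply: X2 => //; card_lia | by [] | card_lia].
  by rewrite !inE wx (subsetP XS _ wX') andbT; apply: contraNneq lX => <-.
rewrite negb_exists_in => /forall_inP low.
have sX : \sum_(t in X) d t <= #|X| * 2.
  apply: sum_leq_card_mul => t tX; have [->|tx] := eqVneq t x; first by rewrite dx.
  by have := low t; rewrite !inE tx tX => /(_ isT); card_lia.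
have : 0 < #|X :\ x| by move: X1; rewrite (cardsD1 x X) xX; card_lia.
case/card_gt0P => w; rewrite !inE => /andP[wx wX].
apply: (pivot w) => [||_|_]; [|by move=> _; apply: X2 => //; card_lia | card_lia | card_lia].
by rewrite !inE wx (subsetP XS _ wX) andbT; apply: contraNneq lX => <-.
Qed.

Lemma cover_tree_card1 S X d : admissible S X d -> #|S| = 1 -> cover_tree S X d.
Proof.
case=> XS sS _ _ cX _ S1; have /cards1P [r Sr] : #|S| == 1 by apply/eqP.
have dr : d r = 0 by move: sS; rewrite Sr big_set1 cards1; card_lia.
have X0 : X = set0 by apply/eqP; rewrite -cards_eq0; move: cX (card_setD_subset XS); card_lia.
exists (fun _ _ => false); split; [rewrite Sr; exact: tree_on_set1 | | split => //].
  by move=> v; rewrite Sr inE => /eqP->; rewrite dr deg_rel0.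
by move=> Z _; rewrite X0 cards0.
Qed.

Lemma cover_tree_card2 S X d : admissible S X d -> #|S| = 2 -> cover_tree S X d.
Proof.
case=> XS sS pS _ cX sXY S2; have cXY := card_setD_subset XS.
have sXY' := sum_setD_subset d XS.
have /cards1P [x Xx] : #|X| == 1.
  rewrite eqn_leq; apply/andP; split; first by card_lia.
  rewrite card_gt0; apply: contraTneq sXY => X0.
  by rewrite X0 setD0 big_set0 -ltnNge; rewrite X0 big_set0 in sXY'; card_lia.
have xS : x \in S by apply: (subsetP XS); rewrite Xx inE.
have /cards1P [y Sy] : #|S :\ x| == 1 by move: S2; rewrite (cardsD1 x) xS; card_lia.
have : y \in S :\ x by rewrite Sy inE.
rewrite !inE => /andP[yx yS].
have SE : S = y |: [set x] by rewrite -(setD1K xS) Sy setUC.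
have [dx dy] : d x = 1 /\ d y = 1.
  have := pS (ltac:(card_lia)) x xS; have := pS (ltac:(card_lia)) y yS.
  by move: sS; rewrite S2 SE big_setU1 ?inE //= big_set1; card_lia.
have tr := tree_on_set1 x; have xx : x \in [set x] by rewrite inE.
have yx' : y \notin [set x] by rewrite inE.
exists (add_leaf (fun _ _ => false) x y); split; [|move=> v|split].
- by rewrite SE; exact: tree_on_add_leaf.
- rewrite SE !inE => /predU1P[->|/eqP->]; first by rewrite (deg_add_leaf_new tr).
  by rewrite (deg_add_leaf tr) // deg_rel0 eqxx.
- by move=> a b; rewrite /add_leaf Xx !inE => /or3P[//|/andP[-> _]|/andP[_ ->]]; rewrite ?orbT.
- move=> Z cZ; rewrite Xx cards1 card_gt0; apply/set0Pn.
  have : add_leaf (fun _ _ => false) x y x y by rewrite /add_leaf !eqxx orbT.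
  by case/cZ/orP; [exists x | exists y].
Qed.

Lemma exists_leaf_outside S X d : admissible S X d -> 2 < #|S| ->
  exists2 l, l \in S :\: X & d l = 1.
Proof.
case=> XS sS pS X2 _ _ S3.
have [/exists_inP[l lY /eqP dl]|] := boolP [exists l in S :\: X, d l == 1]; first by exists l.
rewrite negb_exists_in => /forall_inP Y2.
have sY : #|S :\: X| * 2 <= \sum_(t in S :\: X) d t.
  apply: card_mul_leq_sum => t tY; have := Y2 t tY.
  by move: tY; rewrite inE => /andP[_ /(pS (ltnW S3))]; card_lia.
have sX : #|X| * 2 <= \sum_(t in X) d t by apply: card_mul_leq_sum; apply: X2; card_lia.
by move: sS; rewrite (sum_setD_subset d XS) (card_setD_subset XS); card_lia.
Qed.

Lemma exists_heavy_cover_vertex S X d : admissible S X d -> 2 < #|S| ->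
  {in X, forall x, d x != 2} -> exists x, [/\ x \in X, 2 < d x & #|X| < #|S :\: X|].
Proof.
case=> XS sS pS X2 _ sXY S3 X_not2.
have X3 : {in X, forall x, 2 < d x}.
  by move=> x xX; have := X_not2 x xX; have := X2 (ltac:(card_lia)) x xX; card_lia.
have sX : #|X| * 3 <= \sum_(t in X) d t by apply: card_mul_leq_sum.
have sY : #|S :\: X| * 1 <= \sum_(t in S :\: X) d t.
  by apply: card_mul_leq_sum => t; rewrite inE => /andP[_ /(pS (ltnW S3))].
have cXY := card_setD_subset XS; have sXY' := sum_setD_subset d XS.
have /card_gt0P [x xX] : 0 < #|X| by card_lia.
by exists x; split; [| exact: X3 | card_lia].
Qed.

Theorem admissible_cover_tree S X d : admissible S X d -> cover_tree S X d.
Proof.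
move: {2}#|S| (leqnn #|S|) => m; elim: m S X d => [|m IH] S X d Sm adm.
  by have [_ + _ _ _ _] := adm; move: Sm; card_lia.
have [S3|S_small] := ltnP 2 #|S|; last first.
  have [_ sS _ _ _ _] := adm.
  have [S1|S2] : #|S| = 1 \/ #|S| = 2 by move: sS; card_lia.
  - exact: cover_tree_card1.
  - exact: cover_tree_card2.
have XS := adm_sub adm.
have [l lY dl] := exists_leaf_outside adm S3.
move: (lY); rewrite inE => /andP[lX lS].
have [/exists_inP[x xX /eqP dx]|] := boolP [exists x in X, d x == 2].
  have [w wS' adm'] := exists_pendant_pivot adm S3 xX dx lY dl.
  apply: (cover_tree_graft_pendant XS xX dx lY dl wS').
    by apply: (adm_pos adm); [card_lia | move: wS'; rewrite !inE => /and3P[]].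
  apply: IH adm'; move: Sm; rewrite (cardsD1 l S) lS (cardsD1 x (S :\ l)) !inE.
  by rewrite (subsetP XS _ xX) andbT (_ : x != l) //=; [card_lia | apply: contraNneq lX => <-].
rewrite negb_exists_in => /forall_inP X_not2.
have [x [xX dx XY]] := exists_heavy_cover_vertex adm S3 X_not2.
apply: (cover_tree_graft_leaf XS xX (ltnW (ltnW dx)) lY dl).
apply: IH (admissible_prune_leaf adm S3 xX dx lY dl XY).
by move: Sm; rewrite (cardsD1 l S) lS.
Qed.
End CoverTreeConstruction.

Theorem lemma2 (n : nat) (d : 'I_n -> nat) (X : {set 'I_n}) :
  3 <= n ->
  is_tree_degree_sequence d ->
  (forall i : 'I_n, i \in X -> 1 < d i) ->
  2 * #|X| <= n ->
  \sum_(i in ~: X) d i <= \sum_(i in X) d i ->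
  exists e : rel 'I_n,
    [/\ is_tree e, (forall v : 'I_n, deg e v = d v) & is_min_vertex_cover e X].
Proof.
move=> n3 [_ [e0 [[[irr sym] con acy] de0]]] X_deg X_half sXY.
have deg_sum := tree_sum_deg irr sym acy con.
have deg_pos := tree_deg_gt0 con.
rewrite card_ord in deg_sum deg_pos.
have adm : admissible [set: 'I_n] X d.
  split; rewrite ?setTD ?cardsT ?card_ord.
  - exact: subsetT.
  - rewrite -(deg_sum ltac:(lia)); congr (_ + _).
    by apply: eq_big => [v|v _]; rewrite ?inE ?de0.
  - by move=> n1 t _; rewrite -de0; apply: deg_pos.
  - by move=> _.
  - by have := cardsC X; rewrite card_ord; lia.
  - exact: sXY.
have [e [[_ e_irr e_sym e_con e_acy] e_deg e_cover]] := admissible_cover_tree adm.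
exists e; split => // [|v]; last by apply: e_deg; rewrite inE.
by split => // x y; apply: e_con; rewrite inE.
Qed.
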